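(* Let $(\Lambda(x_1,x_2,x_3,x_4;y_1,y_2,y_3,y_4),\partial)$ be as in the context, let $\alpha\in\mathrm{aut}_\sharp$ with $\alpha(x_1)=x_1$, $\alpha(x_i)=x_i+A_i$ ($i=2,3,4$), and write $P_1=\sum_{k=0}^{s}\theta_k x_4^k$ with $\theta_k\in\mathbb{Q}[x_1,x_2,x_3]$, $\theta_s\neq0$. Then for every $0\le i\le s-1$, $$\alpha(\theta_i)=\theta_i+\sum_{k=1}^{s-i}(-1)^k\binom{k+i}{k}\theta_{k+i}A_4^{k}.$$
   Context: Setting: $x_1,\dots,x_4$ are generators of positive even degrees with $|x_1|\le|x_2|\le|x_3|\le|x_4|$, $y_1,\dots,y_4$ are of odd degree, $(\Lambda(x_1,\dots,x_4;y_1,\dots,y_4),\partial)$ is the free graded-commutative cochain algebra over $\mathbb{Q}$ with $\partial x_i=0$, $\partial y_i=P_i\in\mathbb{Q}[x_1,\dots,x_4]$, where $P_1,\dots,P_4$ is a regular sequence and $|P_1|\le|P_2|\le|P_3|\le|P_4|$. $\mathrm{aut}_\sharp$ is the group of cochain algebra automorphisms inducing the identity on the indecomposables $\mathrm{span}(x_i,y_i)$; for $\alpha\in\mathrm{aut}_\sharp$ one has $\alpha(x_1)=x_1$ and $\alpha(x_i)=x_i+A_i$ with $A_i$ polynomials in the $x_j$. *)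

From HB Require Import structures.
From mathcomp Require Import all_boot all_order all_algebra.
From mathcomp Require Import mpoly.
Set Implicit Arguments. Unset Strict Implicit. Unset Printing Implicit Defensive.
Import Order.TTheory GRing.Theory Num.Theory.
Local Open Scope ring_scope.

(* Q[x_1,...,x_4]; variable x_{i+1} is 'X_i for i : 'I_4. *)
Notation qpoly := {mpoly rat[4]}.

(* The free graded-commutative algebra Lambda(x_1..x_4; y_1..y_4) over Q:
   an element f is  sum_{S subset {1..4}} f(S) * y_S, with y_S = y_{s1}...y_{sk}
   (s1 < ... < sk) and f(S) in Q[x]. *)
Definition Lam := {ffun {set 'I_4} -> qpoly}.

Definition x1 : 'I_4 := @Ordinal 4 0 isT.
Definition x4 : 'I_4 := @Ordinal 4 3 isT.

Definition emb (p : qpoly) : Lam := [ffun S => if S == set0 then p else 0].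
Definition lam_one : Lam := emb 1.
Definition lam_x (i : 'I_4) : Lam := emb 'X_i.
Definition lam_y (i : 'I_4) : Lam := [ffun S => if S == [set i] then 1 else 0].

(* sign of y_S * y_T = (-1)^(inv S T) y_(S u T) for disjoint S T *)
Definition inv_count (S T : {set 'I_4}) : nat :=
  #|[set p : 'I_4 * 'I_4 | [&& p.1 \in S, p.2 \in T & (p.2 < p.1)%N]]|.

Definition lam_mul (f g : Lam) : Lam :=
  [ffun U : {set 'I_4} => \sum_(S : {set 'I_4}) \sum_(T : {set 'I_4} |
               [disjoint S & T] && (S :|: T == U))
               ((-1) ^+ inv_count S T) *: (f S * g T)].

(* differential: d x_i = 0, d y_i = P_i, extended as a derivation *)
Definition lam_d (P : 'I_4 -> qpoly) (f : Lam) : Lam :=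
  [ffun U : {set 'I_4} => \sum_(j : 'I_4 | j \notin U)
               ((-1) ^+ #|[set s in U | (s < j)%N]|) *: (P j * f (j |: U))].

(* weighted degree of a monomial, |x_{i+1}| = dx i *)
Definition wdeg (dx : 'I_4 -> nat) (m : 'X_{1..4}) : nat := \sum_(i < 4) m i * dx i.

Definition poly_homog (dx : 'I_4 -> nat) (n : nat) (p : qpoly) : Prop :=
  forall m, p@_m != 0 -> wdeg dx m = n.

Definition lam_homog (dx dy : 'I_4 -> nat) (n : nat) (f : Lam) : Prop :=
  forall S m, (f S)@_m != 0 -> (wdeg dx m + \sum_(i in S) dy i)%N = n.

(* Lambda^+ : elements with no component in degree 0 (all generators have
   positive degree, so this is "zero constant term") *)
Definition lam_pos (f : Lam) : Prop := (f set0)@_0%MM = 0.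

Definition lam_dec (f : Lam) : Prop :=
  exists r : seq (Lam * Lam),
    (forall p, p \in r -> lam_pos p.1 /\ lam_pos p.2) /\
    f = \sum_(p <- r) lam_mul p.1 p.2.

Definition in_ideal (P : 'I_4 -> qpoly) (k : nat) (q : qpoly) : Prop :=
  exists c : 'I_4 -> qpoly, q = \sum_(j < 4 | (j < k)%N) c j * P j.

Definition regular_seq (P : 'I_4 -> qpoly) : Prop :=
  (forall k : 'I_4, forall q, in_ideal P k (q * P k) -> in_ideal P k q) /\
  ~ in_ideal P 4 1.

Definition sullivan_setting (dx dy : 'I_4 -> nat) (P : 'I_4 -> qpoly) : Prop :=
  (forall i, (0 < dx i)%N /\ ~~ odd (dx i)) /\
      (forall i, odd (dy i)) /\
      (forall i j : 'I_4, (i <= j)%N -> (dx i <= dx j)%N) /\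
      (forall i, poly_homog dx (dy i).+1 (P i)) /\
      (forall i j : 'I_4, (i <= j)%N -> (dy i <= dy j)%N)   (* |P_i| <= |P_j| *)
    /\ regular_seq P.

(* aut_sharp: cochain algebra automorphisms inducing the identity on the
   indecomposables Lambda^+ / (Lambda^+ . Lambda^+). *)
Definition aut_sharp (dx dy : 'I_4 -> nat) (P : 'I_4 -> qpoly) (a : Lam -> Lam) : Prop :=
  (forall f g, a (f + g) = a f + a g) /\
      (forall (c : rat) f, a (c *: f) = c *: a f) /\
      (forall f g, a (lam_mul f g) = lam_mul (a f) (a g)) /\
      a lam_one = lam_one /\
      (forall n f, lam_homog dx dy n f -> lam_homog dx dy n (a f)) /\
      (forall f, a (lam_d P f) = lam_d P (a f)) /\
      bijective a
    /\ (forall f, lam_pos f -> lam_dec (a f - f)).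

From HB Require Import structures.
From mathcomp Require Import all_boot all_order all_algebra.
From mathcomp Require Import mpoly zify ring.
Set Implicit Arguments. Unset Strict Implicit. Unset Printing Implicit Defensive.
Import Order.TTheory GRing.Theory Num.Theory.
Local Open Scope ring_scope.

(* alpha acts on Q[x] as the substitution x_i |-> x_i + A_i.  It fixes y_1,
   because a decomposable element of the minimal odd degree |y_1| vanishes, so
   it fixes P_1 = d y_1.  Each A_i is decomposable of degree |x_i| <= |x_4|, so
   it does not involve x_4, and hence neither do the alpha(theta_k).  Therefore
   P_1 = alpha(P_1) = sum_k alpha(theta_k) (x_4 + A_4)^k, while substituting
   x_4 = (x_4 + A_4) - A_4 into P_1 = sum_k theta_k x_4^k and expanding gives
   the claimed coefficients; the expansion in powers of x_4 + A_4 with x_4-free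
   coefficients is unique. *)

Lemma comp_mpolyA (R : comNzRingType) (n k l : nat) (p : {mpoly R[n]})
    (t : n.-tuple {mpoly R[k]}) (u : k.-tuple {mpoly R[l]}) :
  (p \mPo t) \mPo u = p \mPo [tuple tnth t i \mPo u | i < n].
Proof.
rewrite !(comp_mpolyEX p) raddf_sum /=; apply: eq_bigr => m _.
rewrite comp_mpolyZ !comp_mpolyX rmorph_prod /=; congr (_ *: _).
by apply: eq_bigr => i _; rewrite rmorphXn tnth_mktuple.
Qed.

Section FreeOfVariable.
Variables (R : comNzRingType) (n : nat) (v : 'I_n).
Implicit Types (p q : {mpoly R[n]}).

Definition subst_var q : n.-tuple {mpoly R[n]} :=
  [tuple if i == v then q else 'X_i | i < n].

(* [p] does not involve [x_v], phrased as invariance under [x_v |-> 0] so that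
   it is the fixed ring of a ring endomorphism. *)
Definition free_of : {pred {mpoly R[n]}} := [pred p | p \mPo subst_var 0 == p].

Lemma subst_varE q i : tnth (subst_var q) i = if i == v then q else 'X_i.
Proof. exact: tnth_mktuple. Qed.

Lemma comp_mpolyX_subst_var q : 'X_v \mPo subst_var q = q.
Proof. by rewrite comp_mpolyXU -tnth_nth subst_varE eqxx. Qed.

Fact free_of_subring_closed : subring_closed free_of.
Proof.
split; first by rewrite inE rmorph1.
- by move=> p q /[!inE] /eqP Hp /eqP Hq; rewrite rmorphB /= Hp Hq.
- by move=> p q /[!inE] /eqP Hp /eqP Hq; rewrite rmorphM /= Hp Hq.
Qed.

HB.instance Definition _ := GRing.isSubringClosed.Build _ free_of
  free_of_subring_closed.

Lemma free_ofX i : i != v -> 'X_i \in free_of.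
Proof. by move=> iv; rewrite inE comp_mpolyXU -tnth_nth subst_varE (negbTE iv). Qed.

Lemma free_of_coef p : (forall m, p@_m != 0 -> m v = 0%N) -> p \in free_of.
Proof.
move=> Hp; rewrite inE; apply/eqP; rewrite comp_mpolyEX [RHS]mpolyE.
apply: eq_big_seq => m.
rewrite mcoeff_msupp => /Hp mv0; rewrite comp_mpolyX mpolyXE_id; congr (_ *: _).
by apply: eq_bigr => i _; rewrite subst_varE; case: eqP => [->|//]; rewrite mv0 !expr0.
Qed.

Lemma comp_free_of (k : nat) p (t t' : n.-tuple {mpoly R[k]}) : p \in free_of ->
  (forall i, i != v -> tnth t i = tnth t' i) -> p \mPo t = p \mPo t'.
Proof.
move=> /[!inE] /eqP Hp tt'; rewrite -Hp comp_mpolyA [RHS]comp_mpolyA.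
apply: (congr1 (fun u : n.-tuple {mpoly R[k]} => p \mPo u)).
apply: eq_from_tnth => i; rewrite !tnth_mktuple.
by case: eqP => [_|/eqP iv]; rewrite ?comp_mpoly0 // !comp_mpolyXU -!tnth_nth tt'.
Qed.

Lemma comp_subst_var_free p q : p \in free_of -> p \mPo subst_var q = p.
Proof.
move=> Hp; rewrite (@comp_free_of _ _ _ (subst_var 0)) //; first exact/eqP.
by move=> i iv; rewrite !subst_varE (negbTE iv).
Qed.

Lemma free_of_comp p (t : n.-tuple {mpoly R[n]}) : p \in free_of ->
  (forall i, i != v -> tnth t i \in free_of) -> p \mPo t \in free_of.
Proof.
move=> Hp Ht; rewrite inE comp_mpolyA; apply/eqP/comp_free_of => // i iv.
by rewrite tnth_mktuple; apply/eqP/Ht.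
Qed.

End FreeOfVariable.

Section ExpansionUnique.
Variables (R : idomainType) (n : nat) (v : 'I_n).
Local Notation free := (free_of v).

Lemma mpolyX_neq0 (i : 'I_n) : ('X_i : {mpoly R[n]}) != 0.
Proof.
by apply/eqP => /(congr1 (mcoeff U_(i))); rewrite mcoeffX eqxx mcoeff0 => /eqP; rewrite oner_eq0.
Qed.

Lemma free_of_expansion_eq0 N (d : nat -> {mpoly R[n]}) : (forall k, d k \in free) ->
  \sum_(k < N) d k * 'X_v ^+ k = 0 -> forall k, (k < N)%N -> d k = 0.
Proof.
elim: N d => [//|N IH] d Hd; rewrite big_ord_recl /= => H.
have d0 : d 0%N = 0.
  have := congr1 (comp_mpoly (subst_var v 0)) H.
  rewrite rmorph0 rmorphD rmorph_sum /= expr0 mulr1 comp_subst_var_free // big1 ?addr0 //.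
  by move=> i _; rewrite rmorphM rmorphXn /= comp_mpolyX_subst_var expr0n mulr0.
move: H; rewrite d0 mul0r add0r.
under eq_bigr do rewrite /bump /= add1n exprS mulrCA.
rewrite -mulr_sumr => /eqP; rewrite mulf_eq0 (negbTE (mpolyX_neq0 v)) /= => /eqP H.
by case=> [//|k]; apply: (IH (fun k => d k.+1)).
Qed.

Lemma free_of_shifted_expansion_inj N (d e : nat -> {mpoly R[n]}) B : B \in free ->
  (forall k, d k \in free) -> (forall k, e k \in free) ->
  \sum_(k < N) d k * ('X_v + B) ^+ k = \sum_(k < N) e k * ('X_v + B) ^+ k ->
  forall k, (k < N)%N -> d k = e k.
Proof.
move=> HB Hd He /eqP; rewrite -subr_eq0 -sumrB => /eqP H k kN.
apply/eqP; rewrite -subr_eq0; apply/eqP; move: k kN.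
apply: (free_of_expansion_eq0 (fun k => rpredB (Hd k) (He k))).
have := congr1 (comp_mpoly (subst_var v ('X_v - B))) H.
rewrite rmorph0 rmorph_sum /= => E; apply: etrans E; apply: eq_bigr => k _.
rewrite -mulrBl rmorphM rmorphXn rmorphB rmorphD /=.
by rewrite comp_mpolyX_subst_var !comp_subst_var_free // subrK.
Qed.

End ExpansionUnique.

Section ShiftedExpansion.
Variables (R : comNzRingType) (s : nat) (th : nat -> R) (A : R).

Definition shifted_coef i := th i + \sum_(1 <= k < (s - i).+1)
  (-1) ^+ k * ('C(k + i, k))%:R * th (k + i)%N * A ^+ k.

Lemma shifted_coefE i : (i <= s)%N ->
  shifted_coef i = \sum_(k < s.+1) th k * ('C(k, i))%:R * (- A) ^+ (k - i).
Proof.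
move=> le_is; rewrite -(big_mkord xpredT (fun k => th k * ('C(k, i))%:R * (- A) ^+ (k - i))).
rewrite (big_cat_nat (n := i)) ?leq0n ?(leqW le_is) //=.
rewrite big_nat big1 ?add0r => [|k /andP[_ lt_ki]]; last by rewrite bin_small // mulr0 mul0r.
rewrite (big_addn 0 _ i) subSn // big_ltn //= add0n binn subnn expr0 !mulr1.
congr (_ + _); apply: eq_bigr => j _.
have -> : 'C(j + i, i) = 'C(j + i, j).
  by rewrite -[X in 'C(_, X)](addKn j i) bin_sub ?leq_addr.
by rewrite addnK [(- A) ^+ _]exprNn; ring.
Qed.

Lemma shifted_expansion y :
  \sum_(i < s.+1) shifted_coef i * y ^+ i = \sum_(k < s.+1) th k * (y - A) ^+ k.
Proof.
transitivity (\sum_(i < s.+1) \sum_(k < s.+1) th k * (('C(k, i))%:R * (- A) ^+ (k - i) * y ^+ i)).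
  apply: eq_bigr => i _; rewrite shifted_coefE -1?ltnS // mulr_suml.
  by apply: eq_bigr => k _; ring.
rewrite exchange_big /=; apply: eq_bigr => k _; rewrite -mulr_sumr; congr (_ * _).
rewrite addrC exprDn (big_ord_widen _ (fun i => ((- A) ^+ (k - i) * y ^+ i) *+ 'C(k, i)) (ltn_ord k)).
rewrite [RHS]big_mkcond /=; apply: eq_bigr => i _; case: ifP => le_ik.
  by rewrite -mulr_natl; ring.
by rewrite bin_small ?mul0r // ltnNge -ltnS le_ik.
Qed.

Lemma rpred_shifted_coef (S : subringClosed R) i :
  (forall k, th k \in S) -> A \in S -> shifted_coef i \in S.
Proof.
move=> thS AS; rewrite rpredD ?rpred_sum // => k _.
by rewrite !rpredM ?rpredX ?rpredN ?rpred1 ?rpred_nat.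
Qed.

End ShiftedExpansion.

Lemma emb0 : emb 0 = 0.
Proof. by apply/ffunP => S; rewrite !ffunE; case: ifP. Qed.

Lemma embD p q : emb (p + q) = emb p + emb q.
Proof. by apply/ffunP => S; rewrite !ffunE; case: ifP; rewrite ?addr0. Qed.

Lemma embB p q : emb (p - q) = emb p - emb q.
Proof. by apply/ffunP => S; rewrite !ffunE; case: ifP; rewrite ?subr0. Qed.

Lemma embZ (c : rat) p : emb (c *: p) = c *: emb p.
Proof. by apply/ffunP => S; rewrite !ffunE; case: ifP; rewrite ?scaler0. Qed.

Lemma emb_inj : injective emb.
Proof. by move=> p q /(congr1 (fun f : Lam => f set0)); rewrite !ffunE eqxx. Qed.

Lemma lam_mul_set0 (f g : Lam) : lam_mul f g set0 = f set0 * g set0.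
Proof.
rewrite ffunE (bigD1 set0) //= [X in _ + X]big1 ?addr0 => [|S S0]; last first.
  by apply: big1 => T /andP[_]; rewrite setU_eq0 (negbTE S0).
rewrite (bigD1 set0) /=; last by rewrite -setI_eq0 set0I setU0 eqxx.
have -> : inv_count set0 set0 = 0%N.
  by apply/eqP; rewrite cards_eq0; apply/eqP/setP => pr; rewrite !inE.
rewrite big1 ?addr0 ?expr0 ?scale1r // => T /andP[/andP[_]].
by rewrite setU_eq0 eqxx /= => /eqP ->; rewrite eqxx.
Qed.

Lemma embM p q : emb (p * q) = lam_mul (emb p) (emb q).
Proof.
apply/ffunP => U; have [->|U0] := eqVneq U set0; first by rewrite lam_mul_set0 !ffunE eqxx.
rewrite !ffunE (negbTE U0); symmetry; apply: big1 => S _.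
apply: big1 => T /andP[_ /eqP UST]; rewrite !ffunE.
have [S0|] := eqVneq S set0; last by rewrite mul0r scaler0.
have [T0|] := eqVneq T set0; last by rewrite mulr0 scaler0.
by move: U0; rewrite -UST S0 T0 setU0 eqxx.
Qed.

Lemma lam_d_y (P : 'I_4 -> {mpoly rat[4]}) i : lam_d P (lam_y i) = emb (P i).
Proof.
apply/ffunP => U; rewrite !ffunE; have [->|U0] := eqVneq U set0.
  rewrite (bigD1 i) ?inE //= big1 ?addr0 => [|j /andP[_ ji]]; last first.
    by rewrite ffunE setU0 (inj_eq set1_inj) (negbTE ji) mulr0 scaler0.
  have -> : #|[set k : 'I_4 in set0 | (k < i)%N]| = 0%N.
    by apply/eqP; rewrite cards_eq0; apply/eqP/setP => k; rewrite !inE.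
  by rewrite ffunE setU0 eqxx mulr1 expr0 scale1r.
apply: big1 => j jU; rewrite ffunE; case: eqP => [jUi|]; last by rewrite mulr0 scaler0.
have [k kU] := set0Pn _ U0.
have : k \in [set i] by rewrite -jUi setU1r.
have : j \in [set i] by rewrite -jUi setU11.
by rewrite !inE => /eqP jE /eqP kE; move: jU; rewrite jE -kE kU.
Qed.

Lemma lam_morph_emb (a : Lam -> Lam) (t : 4.-tuple {mpoly rat[4]}) :
  (forall f g, a (f + g) = a f + a g) -> (forall (c : rat) f, a (c *: f) = c *: a f) ->
  (forall f g, a (lam_mul f g) = lam_mul (a f) (a g)) -> a lam_one = lam_one ->
  (forall i, a (lam_x i) = emb (tnth t i)) -> forall p, a (emb p) = emb (p \mPo t).
Proof.
move=> aD aZ aM a1 aX.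
have aM_emb p q : a (emb p) = emb (p \mPo t) -> a (emb q) = emb (q \mPo t) ->
    a (emb (p * q)) = emb ((p * q) \mPo t).
  by move=> ap aq; rewrite embM aM ap aq -embM rmorphM.
elim/mpolyind => [|c m p _ _ ap].
  by rewrite comp_mpoly0 emb0 -(scale0r (0 : Lam)) aZ !scale0r.
rewrite embD aD embZ aZ ap comp_mpolyD comp_mpolyZ embD embZ; congr (_ *: _ + _).
rewrite mpolyXE_id; elim/big_ind: _ => [|q r|j _]; rewrite ?comp_mpoly1 //; first exact: aM_emb.
elim: (m j) => [|k IH]; first by rewrite expr0 comp_mpoly1.
by rewrite exprS; apply: aM_emb => //; rewrite comp_mpolyXU -tnth_nth -aX.
Qed.

Lemma lam_pos_length (f : Lam) S m : lam_pos f -> (f S)@_m != 0 -> (0 < mdeg m + #|S|)%N.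
Proof.
move=> f0; apply: contra_neqT; rewrite addn_gt0 !lt0n mdeg_eq0 cards_eq0 negb_or !negbK.
by case/andP => /eqP -> /eqP ->.
Qed.

Lemma lam_mul_length (f g : Lam) S m : lam_pos f -> lam_pos g ->
  ((lam_mul f g) S)@_m != 0 -> (1 < mdeg m + #|S|)%N.
Proof.
move=> f0 g0; apply: contra_neqT; rewrite -leqNgt => short.
rewrite ffunE raddf_sum big1 // => S1 _; rewrite raddf_sum big1 // => S2 /andP[dS /eqP S12].
rewrite /= mcoeffZ mcoeffM big1 ?mulr0 // => -[m1 m2] /= /eqP m12.
apply: contraTeq short => /[1!mulf_eq0] /norP[/(lam_pos_length f0) len1 /(lam_pos_length g0) len2].
rewrite -ltnNge -S12 cardsU (disjoint_setI0 dS) cards0 subn0 m12 mdegD.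
by move: len1 len2; lia.
Qed.

Lemma lam_dec_length (g : Lam) S m : lam_dec g -> (g S)@_m != 0 -> (1 < mdeg m + #|S|)%N.
Proof.
case=> r [r_pos ->]; apply: contra_neqT; rewrite -leqNgt => short.
rewrite sum_ffunE raddf_sum big1_seq // => -[f h] /andP[_ /r_pos [f0 h0]].
by apply: contraTeq short => /(lam_mul_length f0 h0); rewrite -ltnNge.
Qed.

Section WeightedDegree.
Variable dx : 'I_4 -> nat.
Hypothesis dx_gt0 : forall i, (0 < dx i)%N.

Lemma wdegU i : wdeg dx U_(i)%MM = dx i.
Proof.
rewrite /wdeg (bigD1 i) //= mnm1E eqxx mul1n big1 ?addn0 // => j ji.
by rewrite mnm1E eq_sym (negbTE ji).
Qed.

Lemma wdeg_even m : (forall i, ~~ odd (dx i)) -> ~~ odd (wdeg dx m).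
Proof.
move=> dx_even; rewrite /wdeg; elim/big_ind: _ => // [x y|i _].
  by rewrite oddD => /negbTE -> /negbTE ->.
by rewrite oddM (negbTE (dx_even i)) andbF.
Qed.

Lemma mdeg_le_wdeg m : (mdeg m <= wdeg dx m)%N.
Proof. by rewrite mdegE; apply: leq_sum => i _; rewrite leq_pmulr. Qed.

Lemma wdeg_free_of m v : (1 < mdeg m)%N -> (wdeg dx m <= dx v)%N -> m v = 0%N.
Proof.
rewrite mdegE /wdeg (bigD1 v) //= => deg2; rewrite (bigD1 v) //= => wle.
have : (\sum_(i | i != v) m i <= \sum_(i | i != v) m i * dx i)%N.
  by apply: leq_sum => i _; rewrite leq_pmulr.
move: deg2 wle (dx_gt0 v); set M := (\sum_(i | _) m i)%N; set W := (\sum_(i | _) _)%N.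
by nia.
Qed.

End WeightedDegree.

Section Homogeneity.
Variables dx dy : 'I_4 -> nat.

Lemma lam_homogB n (f g : Lam) :
  lam_homog dx dy n f -> lam_homog dx dy n g -> lam_homog dx dy n (f - g).
Proof.
move=> hf hg S m; rewrite !ffunE mcoeffB.
by have [fm0|/hf //] := eqVneq (f S)@_m 0; rewrite fm0 sub0r oppr_eq0 => /hg.
Qed.

Lemma lam_homog_x i : lam_homog dx dy (dx i) (lam_x i).
Proof.
move=> S m; rewrite ffunE; case: ifP => [/eqP ->|_]; last by rewrite mcoeff0 eqxx.
by rewrite mcoeffX big_set0 addn0; case: (U_(i)%MM =P m) => [<- _|]; rewrite ?eqxx ?wdegU.
Qed.

Lemma lam_homog_y i : lam_homog dx dy (dy i) (lam_y i).
Proof.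
move=> S m; rewrite ffunE; case: ifP => [/eqP ->|_]; last by rewrite mcoeff0 eqxx.
rewrite mcoeff1 big_set1; case: (m =P 0%MM) => [-> _|]; rewrite ?eqxx //.
by rewrite /wdeg big1 // => j _; rewrite mnm0E.
Qed.

Lemma lam_dec_homog_eq0 n (g : Lam) :
  (forall i, (0 < dx i)%N /\ ~~ odd (dx i)) -> (forall i, odd (dy i)) ->
  odd n -> (forall j, (n <= dy j)%N) ->
  lam_homog dx dy n g -> lam_dec g -> g = 0.
Proof.
move=> dx_ok dy_odd n_odd n_min hg g_dec.
apply/ffunP => S; apply/mpolyP => m; rewrite ffunE mcoeff0; apply/eqP/contraT => gm.
have len2 := lam_dec_length g_dec gm; have degn := hg S m gm.
have [S0|S_ne0] := eqVneq S set0.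
  move: degn; rewrite S0 big_set0 addn0 => wn.
  by have := wdeg_even m (fun i => (dx_ok i).2); rewrite wn n_odd.
have Sdy : (#|S| * n <= \sum_(i in S) dy i)%N by rewrite -sum_nat_const leq_sum.
have := mdeg_le_wdeg (fun i => (dx_ok i).1) m; have := odd_gt0 n_odd.
by move: S_ne0; rewrite -card_gt0; nia.
Qed.

End Homogeneity.

Section AutSharp.
Variables (dx dy : 'I_4 -> nat) (P : 'I_4 -> {mpoly rat[4]}) (a : Lam -> Lam).
Hypotheses (setting : sullivan_setting dx dy P) (a_sharp : aut_sharp dx dy P a).

Lemma aut_sharp_emb (t : 4.-tuple {mpoly rat[4]}) :
  (forall i, a (lam_x i) = emb (tnth t i)) -> forall p, a (emb p) = emb (p \mPo t).
Proof. by case: a_sharp => aD [aZ [aM [a1 _]]]; apply: lam_morph_emb. Qed.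

Lemma aut_sharp_fix_y1 : a (lam_y x1) = lam_y x1.
Proof.
case: setting => dx_ok [dy_odd [_ [_ [dy_mono _]]]].
case: a_sharp => _ [_ [_ [_ [a_homog [_ [_ a_dec]]]]]].
apply/eqP; rewrite -subr_eq0; apply/eqP.
apply: (lam_dec_homog_eq0 dx_ok dy_odd (dy_odd x1)) => [j||].
- exact: dy_mono.
- by apply: lam_homogB; [apply: a_homog|]; apply: lam_homog_y.
- apply: a_dec; rewrite /lam_pos ffunE.
  by rewrite eq_sym -subset0 sub1set inE mcoeff0.
Qed.

Lemma aut_sharp_fix_P1 : a (emb (P x1)) = emb (P x1).
Proof.
by case: a_sharp => _ [_ [_ [_ [_ [a_d _]]]]]; rewrite -lam_d_y a_d aut_sharp_fix_y1.
Qed.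

Lemma aut_sharp_shift_free_of i B : a (lam_x i) = emb ('X_i + B) -> B \in free_of x4.
Proof.
case: setting => dx_ok [_ [dx_mono _]].
case: a_sharp => _ [_ [_ [_ [a_homog [_ [_ a_dec]]]]]] a_xi.
have xi_pos : lam_pos (lam_x i).
  by rewrite /lam_pos ffunE eqxx mcoeffX; case: eqP => // /(congr1 mdeg); rewrite mdeg1 mdeg0.
have B_dec : lam_dec (emb B) by move: (a_dec _ xi_pos); rewrite a_xi /lam_x -embB addrC addKr.
apply: free_of_coef => m Bm.
have len2 : (1 < mdeg m)%N.
  by have := lam_dec_length (S := set0) (m := m) B_dec; rewrite ffunE eqxx cards0 addn0; apply.
have := a_homog _ _ (@lam_homog_x dx dy i) set0 m; rewrite a_xi ffunE eqxx mcoeffD mcoeffX.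
case: (U_(i)%MM =P m) => [Um|_]; first by move: len2; rewrite -Um mdeg1.
rewrite add0r big_set0 addn0 => /(_ Bm) wdeg_m.
apply: (wdeg_free_of (fun j => (dx_ok j).1)) => //; rewrite wdeg_m.
by apply: dx_mono; rewrite -ltnS.
Qed.

End AutSharp.

Unset Implicit Arguments.

Theorem proposition3p3
  (dx dy : 'I_4 -> nat) (P : 'I_4 -> {mpoly rat[4]})
  (a : Lam -> Lam) (A : 'I_4 -> {mpoly rat[4]})
  (s : nat) (theta : nat -> {mpoly rat[4]}) :
  sullivan_setting dx dy P ->
  aut_sharp dx dy P a ->
  a (lam_x x1) = lam_x x1 ->
  (forall i : 'I_4, i != x1 -> a (lam_x i) = emb ('X_i + A i)) ->
  (* P_1 = sum_{k=0}^s theta_k x_4^k with theta_k in Q[x_1,x_2,x_3], theta_s <> 0 *)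
  (forall k m, (theta k)@_m != 0 -> m x4 = 0%N) ->
  theta s != 0 ->
  P x1 = \sum_(k < s.+1) theta k * 'X_x4 ^+ k ->
  forall i : nat, (i <= s - 1)%N -> (i < s)%N ->
    a (emb (theta i)) =
    emb (theta i + \sum_(1 <= k < (s - i).+1)
                     (-1) ^+ k * ('C(k + i, k))%:R * theta (k + i)%N * A x4 ^+ k).
Proof.
move=> setting a_sharp a_x1 a_x th_x4 _ P1E i _ lt_is.
pose t : 4.-tuple {mpoly rat[4]} := [tuple if j == x1 then 'X_j else 'X_j + A j | j < 4].
have A_free j : j != x1 -> A j \in free_of x4.
  by move=> j1; apply: aut_sharp_shift_free_of setting a_sharp _ _ (a_x j j1).
have a_emb : forall p, a (emb p) = emb (p \mPo t).
  apply: (aut_sharp_emb a_sharp) => j; rewrite tnth_mktuple.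
  by case: eqP => [->|/eqP j1]; [exact: a_x1 | exact: a_x].
have th_free k : theta k \in free_of x4 := free_of_coef (th_x4 k).
have th_t_free k : theta k \mPo t \in free_of x4.
  apply: free_of_comp => // j j4; rewrite tnth_mktuple.
  by case: eqP => [_|/eqP j1]; rewrite ?rpredD ?free_ofX ?A_free.
have P1_fixed : P x1 \mPo t = P x1.
  by apply: emb_inj; rewrite -a_emb (aut_sharp_fix_P1 setting a_sharp).
have x4_t : 'X_x4 \mPo t = 'X_x4 + A x4 by rewrite comp_mpolyXU -tnth_nth tnth_mktuple.
rewrite a_emb; congr emb.
have shift_inj := free_of_shifted_expansion_inj (A_free x4 isT) th_t_free.
change (theta i \mPo t = shifted_coef s theta (A x4) i).
apply: (shift_inj s.+1 (shifted_coef s theta (A x4)) _ _ _ (ltnW lt_is)) => [k|].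
- exact: rpred_shifted_coef (A_free x4 isT).
- rewrite shifted_expansion addrK -[RHS]P1E -[RHS]P1_fixed P1E rmorph_sum.
  by apply: eq_bigr => k _; rewrite rmorphM rmorphXn /= x4_t.
Qed.
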